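(* Let $i,n$ be natural numbers and let $A$ be a brace of cardinality $p^n$, where $p$ is a prime with $p>n+1$. Let $I$ be an ideal of $A$. Then $p^iI=\{p^ia: a\in I\}$ is an ideal of $A$.
   Context: A (left) brace is a set $A$ with binary operations $+,\circ$ such that $(A,+)$ is an abelian group, $(A,\circ)$ is a group, and $a\circ(b+c)+a=a\circ b+a\circ c$ for all $a,b,c$. Write $a*b=a\circ b-a-b$. An ideal of a brace $A$ is a subgroup $I$ of $(A,+)$ which is a normal subgroup of $(A,\circ)$ and satisfies $a*x\in I$ for all $a\in A$, $x\in I$; equivalently, an additive subgroup $I$ with $A*I\subseteq I$ and $I*A\subseteq I$. $p^ia$ denotes the $p^i$-fold additive multiple of $a$. *)

From mathcomp Require Import all_boot all_algebra.
Set Implicit Arguments. Unset Strict Implicit. Unset Printing Implicit Defensive.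
Import GRing.Theory.
Local Open Scope ring_scope.

Definition is_group (T : Type) (op : T -> T -> T) : Prop :=
  (forall x y z, op x (op y z) = op (op x y) z) /\
  exists e : T, (forall x, op e x = x /\ op x e = x) /\
                (forall x, exists y, op x y = e /\ op y x = e).

Definition is_brace (A : zmodType) (circ : A -> A -> A) : Prop :=
  is_group circ /\
  forall a b c : A, circ a (b + c) + a = circ a b + circ a c.

Definition bstar (A : zmodType) (circ : A -> A -> A) (a b : A) : A :=
  circ a b - a - b.

Definition is_ideal (A : finZmodType) (circ : A -> A -> A) (I : {set A}) : Prop :=
  [/\ 0 \in I,
      (forall x y, x \in I -> y \in I -> x - y \in I),
      (forall a x, x \in I -> bstar circ a x \in I) &
      (forall x a, x \in I -> bstar circ x a \in I)].

From HB Require Import structures.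
From mathcomp Require Import all_boot all_algebra all_fingroup all_solvable.
Set Implicit Arguments. Unset Strict Implicit. Unset Printing Implicit Defensive.
Import GRing.Theory.
Local Open Scope ring_scope.

(* We show that
   pJ = {p x | x in J} is again an ideal; iterating gives the ideal p^i I.
   Since pJ is an additive subgroup and a * (p x) = p (a * x), the content lies
   in the right star products (p z) * a.  Counting the
     cosets fixed by this p-group shows that the series B_0 = 0,
     B_(k+1) = {v | A * v <= B_k} grows by a factor p until it reaches A, so
     B_n = A and every n-fold iterated star product vanishes.
   - For y in J, y^(o p) * a lies in pJ, since p divides C(p, k) for 0 < k < p.
   - By induction along B_k: for z in J and B_(k+1), p z = z^(o p) o (p t) with
     t in J and B_k, and (x o y) * a = x * a + lambda_x(y * a), so (p z) * a
     lies in pJ. *)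

Section BraceCalculus.
Variables (A : zmodType) (circ : A -> A -> A).
Hypothesis hA : is_brace circ.

Lemma circA x y z : circ x (circ y z) = circ (circ x y) z.
Proof. by case: hA => -[]. Qed.

(* Taking b = c = 0 in the brace axiom shows that 0 is a right identity of o,
   hence it is the identity of the group (A, o). *)
Lemma circx0 x : circ x 0 = x.
Proof. by have := hA.2 x 0 0; rewrite addr0 => /addrI /esym. Qed.

Lemma circ0x x : circ 0 x = x.
Proof.
case: hA => -[_ [e [he _]]] _.
have e0 : e = 0 by rewrite -[LHS]circx0; case: (he 0).
by rewrite -e0; case: (he x).
Qed.

Lemma circ_inverse x : exists y, circ x y = 0 /\ circ y x = 0.
Proof.
case: hA => -[_ [e [he hinv]]] _.
have e0 : e = 0 by rewrite -[LHS]circx0; case: (he 0).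
by rewrite -e0; apply: hinv.
Qed.

Definition lam (a x : A) := circ a x - a.

Lemma circE a x : circ a x = a + lam a x.
Proof. by rewrite addrC subrK. Qed.

Lemma lamB a : {morph lam a : x y / x - y}.
Proof.
move=> x y; have := hA.2 a (x - y) y; rewrite subrK /lam => /(canRL (addrK a)) ->.
by rewrite opprB addrAC !addrA subrK addrK.
Qed.

Definition lam_additive a : {additive A -> A} :=
  HB.pack (lam a) (GRing.isZmodMorphism.Build A A (lam a) (lamB a)).

Lemma lam0 a : lam a 0 = 0.
Proof. exact: (raddf0 (lam_additive a)). Qed.

Lemma lamD a : {morph lam a : x y / x + y}.
Proof. exact: (raddfD (lam_additive a)). Qed.

Lemma lamN a : {morph lam a : x / - x}.
Proof. exact: (raddfN (lam_additive a)). Qed.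

Lemma lamMn a x m : lam a (x *+ m) = lam a x *+ m.
Proof. exact: (raddfMn (lam_additive a)). Qed.

Lemma lam0x x : lam 0 x = x.
Proof. by rewrite /lam circ0x subr0. Qed.

Lemma lamM a b x : lam (circ a b) x = lam a (lam b x).
Proof. by rewrite [LHS]/lam -circA [lam b x]/lam lamB /lam opprB addrA subrK. Qed.

Lemma bstarE a x : bstar circ a x = lam a x - x.
Proof. by rewrite /bstar /lam. Qed.

Lemma lamE a x : lam a x = x + bstar circ a x.
Proof. by rewrite bstarE addrC subrK. Qed.

Lemma bstarB a : {morph bstar circ a : x y / x - y}.
Proof. by move=> x y; rewrite !bstarE lamB !opprD !opprK addrACA. Qed.

Definition bstar_additive a : {additive A -> A} :=
  HB.pack (bstar circ a) (GRing.isZmodMorphism.Build A A (bstar circ a) (bstarB a)).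

Lemma bstar0 a : bstar circ a 0 = 0.
Proof. exact: (raddf0 (bstar_additive a)). Qed.

Lemma bstarMn a x m : bstar circ a (x *+ m) = bstar circ a x *+ m.
Proof. exact: (raddfMn (bstar_additive a)). Qed.

Lemma bstar_sum a I (r : seq I) (P : pred I) (F : I -> A) :
  bstar circ a (\sum_(i <- r | P i) F i) = \sum_(i <- r | P i) bstar circ a (F i).
Proof. exact: (raddf_sum (bstar_additive a)). Qed.

End BraceCalculus.

Section BinomialExpansions.
Variables (A : zmodType) (circ : A -> A -> A).
Hypothesis hA : is_brace circ.

(* Integer combinations sum_(k < N) c_k (y * (y * ... (y * u))) of iterated
   left star products; lambda_y = id + (y * _) acts on them by Pascal's rule. *)
Definition star_comb (y : A) (N : nat) (c : nat -> nat) (u : A) : A :=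
  \sum_(k < N) iter k (bstar circ y) u *+ c k.

Lemma lam_star_comb y N c u : c N = 0%N ->
  lam circ y (star_comb y N.+1 c u) =
  star_comb y N.+1 (fun k => c k + (if k is k'.+1 then c k' else 0))%N u.
Proof.
move=> cN; rewrite lamE /star_comb.
under [RHS]eq_bigr do rewrite mulrnDr.
rewrite big_split /= (bstar_sum hA); congr (_ + _).
rewrite big_ord_recr /= cN mulr0n (bstar0 hA) addr0 big_ord_recl /= mulr0n add0r.
by apply: eq_bigr => k _; rewrite (bstarMn hA).
Qed.

Lemma lam_iter_binomial y m N u : (m <= N)%N ->
  iter m (lam circ y) u = star_comb y N.+1 (fun k => 'C(m, k)) u.
Proof.
elim: m => [|m IH] le.
  by rewrite /star_comb big_ord_recl /= mulr1n big1 ?addr0.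
rewrite iterS IH ?(ltnW le) // lam_star_comb ?bin_small //.
by apply: eq_bigr => -[[|k] hk] _ /=; rewrite ?bin0 ?binS // addn0.
Qed.

Definition cpow (y : A) (m : nat) : A := iter m (circ y) 0.

Lemma lam_cpow y m x : lam circ (cpow y m) x = iter m (lam circ y) x.
Proof. by elim: m => [|m IH] /=; rewrite ?(lam0x hA) // (lamM hA) IH. Qed.

Lemma cpow_binomial y m N : (m <= N)%N ->
  cpow y m = star_comb y N.+1 (fun k => 'C(m, k.+1)) y.
Proof.
elim: m => [|m IH] le.
  by rewrite /star_comb big1 // => k _; rewrite bin0n mulr0n.
rewrite /cpow iterS -/(cpow y m) circE IH ?(ltnW le) //.
rewrite lam_star_comb ?bin_small ?ltnS ?(ltnW le) //.
rewrite /star_comb !big_ord_recl /= addrA; congr (_ + _).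
by rewrite !bin1 addn0 mulrS.
Qed.

End BinomialExpansions.

(* For a finite brace, (A, o) is a finite group; we realise its opposite group
   on a copy of A, so that x |-> lambda_g(x) becomes a (right) group action. *)
Definition circ_group (A : finZmodType) (circ : A -> A -> A) (h : is_brace circ) : Type := A.
HB.instance Definition _ A circ h := Finite.copy (@circ_group A circ h) A.

Definition circ_inv (A : finZmodType) (circ : A -> A -> A) (x : A) : A :=
  odflt 0 [pick y | (circ x y == 0) && (circ y x == 0)].

Section CircGroup.
Variables (A : finZmodType) (circ : A -> A -> A) (h : is_brace circ).

Lemma circ_invP x : circ x (circ_inv circ x) = 0 /\ circ (circ_inv circ x) x = 0.
Proof.
rewrite /circ_inv; case: pickP => [y /andP[/eqP -> /eqP ->] //|none].
have [y [yr yl]] := circ_inverse h x.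
by have := none y; rewrite yr yl !eqxx.
Qed.

Definition circ_opp_mul (x y : circ_group h) : circ_group h := circ y x.

Lemma circ_opp_mulA : associative circ_opp_mul.
Proof. by move=> x y z; rewrite /circ_opp_mul (circA h). Qed.

Lemma circ_opp_mul1 : left_id (0 : circ_group h) circ_opp_mul.
Proof. by move=> x; rewrite /circ_opp_mul (circx0 h). Qed.

Lemma circ_opp_mulV : left_inverse (0 : circ_group h) (circ_inv circ) circ_opp_mul.
Proof. by move=> x; rewrite /circ_opp_mul (circ_invP x).1. Qed.

End CircGroup.

HB.instance Definition _ A circ h := Finite_isGroup.Build (@circ_group A circ h)
  (@circ_opp_mulA A circ h) (@circ_opp_mul1 A circ h) (@circ_opp_mulV A circ h).

Section LambdaAction.
Variables (A : finZmodType) (circ : A -> A -> A) (h : is_brace circ).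

Definition lam_act (x : A) (g : circ_group h) : A := lam circ g x.

Lemma lam_act1 : lam_act^~ 1%g =1 id.
Proof. exact: (lam0x h). Qed.

Lemma lam_actM x : act_morph lam_act x.
Proof. by move=> a b; rewrite /lam_act /= (lamM h). Qed.

Definition lam_action := TotalAction lam_act1 lam_actM.

End LambdaAction.

Local Open Scope group_scope.

Section StarSeries.
Variables (A : finZmodType) (circ : A -> A -> A) (h : is_brace circ).
Variables (p n : nat) (pp : prime p) (hcard : #|A| = (p ^ n)%N).

Local Notation to := (lam_action h).

Lemma mem_rcosetB (B : {group A}) x y : (y \in B :* x) = ((y - x)%R \in B).
Proof. exact: mem_rcoset. Qed.

Lemma pgroup_circ_group : p.-group [set: circ_group h].
Proof. by rewrite /pgroup cardsT hcard pnatX pnat_id. Qed.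

Lemma lam_rcoset (B : {group A}) (g : circ_group h) x :
  (forall (a : A) y, y \in B -> lam circ a y \in B) ->
  (to^* (B :* x) g)%act = B :* lam circ g x.
Proof.
move=> Binv; apply/setP => y; rewrite /= setactE; apply/imsetP/idP.
  by case=> z; rewrite !mem_rcosetB => zB ->; rewrite /= /lam_act -(lamB h) Binv.
rewrite mem_rcosetB => yB; exists (to y g^-1); last by rewrite actKV.
rewrite mem_rcosetB -[X in (_ - X)%R](actK to g x) /= /lam_act -(lamB h).
exact: Binv.
Qed.

(* If B is a proper lambda-invariant additive subgroup, some v outside B is fixed
   modulo B by all lambda_g, i.e. g * v lies in B for all g: the p-group (A, o)
   acts on the p-power number of cosets of B, fixes the coset B itself, hence
   fixes at least p of them. *)
Lemma fixed_coset (B : {group A}) :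
  (forall (a : A) y, y \in B -> lam circ a y \in B) -> ~~ ([set: A] \subset B) ->
  exists2 v, v \notin B & forall g, bstar circ g v \in B.
Proof.
move=> Binv nB; set S := rcosets B [set: A].
have actsS : [acts [set: circ_group h], on S | to^*].
  have stable g C : C \in S -> (to^* C g)%act \in S.
    case/rcosetsP=> x _ ->; rewrite lam_rcoset //.
    by apply/rcosetsP; exists (lam circ g x); rewrite ?inE.
  apply/actsP => g _ C; apply/idP/idP => [|/stable //].
  by move/(stable g^-1); rewrite actK.
have pS : (p %| #|S|)%N.
  have : (#|S| %| p ^ n)%N by rewrite -hcard -cardsT dvdn_indexg.
  case/dvdn_pfactor => // [[|m]] _ Sm; last by rewrite Sm expnS dvdn_mulr.
  by move: nB; rewrite -indexg_eq1 /indexg -/S Sm.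
set F := 'Fix_(S | to^*)([set: circ_group h]).
have BF : (B : {set A}) \in F.
  rewrite inE; apply/andP; split; first by apply/rcosetsP; exists 0; rewrite ?inE ?rcoset1.
  apply/afixP => g _; have := lam_rcoset g 0 Binv.
  by rewrite rcoset1 /= (lam0 h) rcoset1.
have pF : (p %| #|F|)%N by move: pS; rewrite /dvdn (pgroup_fix_mod pgroup_circ_group actsS).
have : (0 < #|F :\ (B : {set A})|)%N.
  rewrite lt0n; apply: contraTneq pF => F0.
  by rewrite (cardsD1 (B : {set A})) BF F0 dvdn1 neq_ltn (prime_gt1 pp) orbT.
rewrite card_gt0 => /set0Pn [C] /setD1P [CB /setIP[/rcosetsP[v _ Cv] /afixP Cfix]].
exists v; first by apply: contra CB => vB; rewrite Cv rcoset_id.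
move=> g; rewrite bstarE -mem_rcosetB -Cv -(Cfix g) ?inE // Cv lam_rcoset //.
by rewrite rcoset_refl.
Qed.

(* The series {0} = B_0 <= B_1 <= ... with B_(k+1) = {v | a * v \in B_k for all a}:
   B_k consists of the v killed by every k-fold product a_1 * (... * (a_k * v)). *)
Fixpoint star_series (k : nat) : {set A} :=
  if k is k'.+1 then [set v | [forall a, bstar circ a v \in star_series k']]
  else [set 0%R].

Lemma mem_star_seriesS k v :
  (v \in star_series k.+1) = [forall a, bstar circ a v \in star_series k].
Proof. by rewrite inE. Qed.

Lemma star_series_zmod k : GRing.zmod_closed (star_series k).
Proof.
elim: k => [|k [IH0 IHB]] /=.
  by split=> [|x y]; rewrite ?inE // => /eqP -> /eqP ->; rewrite subr0.
split=> [|x y]; rewrite !inE; first by apply/forallP => a; rewrite (bstar0 h).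
by move=> /forallP xB /forallP yB; apply/forallP => a; rewrite (bstarB h) IHB.
Qed.

Lemma star_series_gs k : group_set (star_series k).
Proof.
have [k0 _] := star_series_zmod k.
apply/group_setP; split=> // x y xB yB.
exact: Algebra.zmod_closedD (star_series_zmod k) x y xB yB.
Qed.

Canonical star_series_group k := group (star_series_gs k).

Lemma star_series_mono k : star_series k \subset star_series k.+1.
Proof.
elim: k => [|k IH]; apply/subsetP => x.
  by rewrite !inE => /eqP ->; apply/forallP => a; rewrite (bstar0 h) inE.
rewrite mem_star_seriesS => /forallP xB.
by rewrite mem_star_seriesS; apply/forallP => a; apply: (subsetP IH).
Qed.

Lemma star_series_star k a x : x \in star_series k -> bstar circ a x \in star_series k.
Proof.
case: k => [|k]; first by rewrite !inE => /eqP ->; rewrite (bstar0 h).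
rewrite mem_star_seriesS => /forallP xB; exact: (subsetP (star_series_mono k)).
Qed.

Lemma star_series_lam k a x : x \in star_series k -> lam circ a x \in star_series k.
Proof.
move=> xB; rewrite lamE.
exact: Algebra.zmod_closedD (star_series_zmod k) _ _ xB (star_series_star a xB).
Qed.

(* While B_k is proper, a v as in fixed_coset lies in B_(k+1) but not in B_k, so
   the index of B_k in B_(k+1), a power of p, is at least p. *)
Lemma star_series_step k : ~~ ([set: A] \subset star_series k) ->
  (#|star_series k| * p <= #|star_series k.+1|)%N.
Proof.
move=> nT; have [v vB vfix] := fixed_coset (@star_series_lam k) nT.
have vB1 : v \in star_series k.+1 by rewrite mem_star_seriesS; apply/forallP.
have : (#|star_series_group k.+1 : star_series_group k| %| p ^ n)%N.
  by rewrite -hcard -cardsT (dvdn_trans (dvdn_indexg _ _)) // cardSg ?subsetT.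
case/dvdn_pfactor => // [[|m]] _ em.
  by move/eqP: em; rewrite indexg_eq1 => /subsetP/(_ v vB1); rewrite (negPf vB).
rewrite -(Lagrange (star_series_mono k)) em leq_mul //.
by rewrite expnS leq_pmulr // expn_gt0 prime_gt0.
Qed.

Lemma star_series_card k : star_series k = [set: A] \/ (p ^ k <= #|star_series k|)%N.
Proof.
elim: k => [|k [IH|IH]]; first by right; rewrite cards1.
  by left; apply/eqP; rewrite eqEsubset subsetT /= -IH star_series_mono.
have [sT|nT] := boolP ([set: A] \subset star_series k).
  by left; apply/eqP; rewrite eqEsubset subsetT (subset_trans sT (star_series_mono k)).
by right; rewrite expnSr (leq_trans _ (star_series_step nT)) ?leq_mul.
Qed.

Lemma star_series_full : star_series n = [set: A].
Proof.
case: (star_series_card n) => // le.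
by apply/eqP; rewrite eqEcard subsetT /= cardsT hcard.
Qed.

Lemma iter_star_vanish m y x : (n <= m)%N -> iter m (bstar circ y) x = 0%R.
Proof.
have iter_series k z : z \in star_series k -> iter k (bstar circ y) z = 0%R.
  elim: k z => [|k IH] z; first by rewrite inE => /eqP.
  by rewrite iterSr inE => /forallP zB; apply: IH.
move/subnK <-; rewrite addnC iterD; apply: iter_series.
by rewrite star_series_full inE.
Qed.

End StarSeries.

Local Close Scope group_scope.

Definition scale_set (A : finZmodType) (X : {set A}) (m : nat) : {set A} :=
  [set x *+ m | x in X].

Section ScaleSet.
Variables (A : finZmodType) (X : {set A}) (m : nat).
Hypothesis zmodX : GRing.zmod_closed X.

Lemma scale_set0 : 0 \in scale_set X m.
Proof. by apply/imsetP; exists 0; rewrite ?mul0rn //; case: zmodX. Qed.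

Lemma scale_set_sum N (F : 'I_N -> A) :
  (forall k, F k \in scale_set X m) -> \sum_(k < N) F k \in scale_set X m.
Proof.
move=> Fm; apply: (big_ind (fun x => x \in scale_set X m)) => //; first exact: scale_set0.
move=> _ _ /imsetP[x xX ->] /imsetP[y yX ->]; apply/imsetP; exists (x + y).
  exact: Algebra.zmod_closedD zmodX _ _ xX yX.
by rewrite mulrnDl.
Qed.

Lemma scale_set_mulrn z j : z \in X -> (m %| j)%N \/ z = 0 -> z *+ j \in scale_set X m.
Proof.
have [X0 _] := zmodX.
have mulrn_closed x i : x \in X -> x *+ i \in X.
  move=> xX; elim: i => [|i IH]; rewrite ?mulr0n // mulrS.
  exact: Algebra.zmod_closedD zmodX _ _ xX IH.
move=> zX [/dvdnP[q ->]|->]; last by apply/imsetP; exists 0; rewrite ?mul0rn.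
by apply/imsetP; exists (z *+ q); rewrite ?mulrnA ?mulrn_closed.
Qed.

Lemma scale_set1 : scale_set X 1 = X.
Proof. by apply/setP=> x; apply/imsetP/idP=> [[y yX ->]|xX]; [|exists x]. Qed.

Lemma scale_setM m' : scale_set X (m * m') = scale_set (scale_set X m) m'.
Proof. by rewrite /scale_set -imset_comp; apply: eq_imset => x /=; rewrite mulrnA. Qed.

End ScaleSet.

Section PowerIdeal.
Variables (A : finZmodType) (circ : A -> A -> A) (h : is_brace circ).
Variables (p n : nat) (pp : prime p) (hcard : #|A| = (p ^ n)%N) (hnp : (n < p)%N).
Variables (J : {set A}) (hJ : is_ideal circ J).

Lemma ideal_zmod : GRing.zmod_closed J.
Proof. by case: hJ. Qed.

Lemma idealD x y : x \in J -> y \in J -> x + y \in J.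
Proof. exact: Algebra.zmod_closedD ideal_zmod x y. Qed.

Lemma idealN x : x \in J -> - x \in J.
Proof. exact: Algebra.zmod_closedN ideal_zmod x. Qed.

Lemma ideal_starl a x : x \in J -> bstar circ a x \in J.
Proof. by case: hJ => _ _ + _; apply. Qed.

Lemma ideal_starr x a : x \in J -> bstar circ x a \in J.
Proof. by case: hJ => _ _ _; apply. Qed.

Lemma ideal_lam a x : x \in J -> lam circ a x \in J.
Proof. by move=> xJ; rewrite lamE idealD ?ideal_starl. Qed.

Definition rstar_pJ (x : A) : Prop := forall a, bstar circ x a \in scale_set J p.

(* (x o y) * a = x * a + lambda_x(y * a). *)
Lemma rstar_pJ_circ x y : rstar_pJ x -> rstar_pJ y -> rstar_pJ (circ x y).
Proof.
move=> Kx Ky a; have /imsetP[q qJ yaq] := Ky a; have /imsetP[q' q'J xaq'] := Kx a.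
apply/imsetP; exists (q' + lam circ x q); first by rewrite idealD ?ideal_lam.
rewrite bstarE (lamM h) (lamE circ y a) yaq (lamD h) (lamMn h).
by rewrite addrAC -bstarE xaq' -mulrnDl.
Qed.

(* For y in J, y^(o p) * a = sum_(0 < k <= p) C(p, k) (y * _)^k a lies in pJ:
   p divides C(p, k) for 0 < k < p, and the k = p term vanishes as n <= p. *)
Lemma rstar_pJ_cpow y : y \in J -> rstar_pJ (cpow circ y p).
Proof.
move=> yJ a; rewrite bstarE (lam_cpow h) (lam_iter_binomial h y a (leqnn p)).
rewrite /star_comb big_ord_recl /= bin0 mulr1n addrC addKr.
apply: (scale_set_sum ideal_zmod) => k; rewrite add0n /bump leq0n add1n.
apply: (scale_set_mulrn ideal_zmod); first exact: ideal_starr.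
have [ltkp|] := ltnP k.+1 p; first by left; rewrite prime_dvd_bin.
rewrite leq_eqVlt ltnNge ltn_ord orbF => /eqP kp.
by right; rewrite -iterS (iter_star_vanish h pp hcard) // -kp ltnW.
Qed.

(* For z in J and in B_(k+1), expanding z^(o p) = sum_k C(p, k + 1) (z * _)^k z
   gives z^(o p) = p z + p w with w in J and in B_k: the terms with k > 0 start
   with z * z in B_k, p divides their coefficients except for k = p - 1, and that
   term vanishes as n <= p - 1. *)
Lemma cpow_p_decomp k z : z \in J -> z \in star_series circ k.+1 ->
  exists2 w, w \in J :&: star_series circ k & cpow circ z p = z *+ p + w *+ p.
Proof.
move=> zJ; rewrite mem_star_seriesS => /forallP zzB.
set X := J :&: star_series circ k.
have zmodX : GRing.zmod_closed X.
  have [J0 JB] := ideal_zmod; have [B0 BB] := star_series_zmod h k.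
  by split=> [|x y]; rewrite !inE ?J0 ?B0 // => /andP[xJ xB] /andP[yJ yB]; rewrite JB ?BB.
have iterX j x : x \in X -> iter j (bstar circ z) x \in X.
  elim: j => //= j IH /IH; rewrite !inE => /andP[xJ xB].
  by rewrite ideal_starl ?star_series_star.
have : \sum_(j < p) iter j.+1 (bstar circ z) z *+ 'C(p, j.+2) \in scale_set X p.
  apply: (scale_set_sum zmodX) => j; apply: (scale_set_mulrn zmodX).
    by rewrite iterSr iterX // inE ideal_starl ?zzB.
  have [ltjp|gtjp|eqjp] := ltngtP j.+2 p; first by left; rewrite prime_dvd_bin.
    by left; rewrite bin_small.
  by right; apply: (iter_star_vanish h pp hcard); rewrite -ltnS eqjp.
case/imsetP=> w wX ew; exists w => //.
by rewrite (cpow_binomial h z (leqnn p)) /star_comb big_ord_recl /= bin1 -ew.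
Qed.

(* Writing u = z^(o p),
   p z = u o t with t = p (- lambda_(u^-1)(w)), where u is handled by
   rstar_pJ_cpow and t by induction, since - lambda_(u^-1)(w) is in J and B_k. *)
Lemma rstar_pJ_mul k z : z \in J -> z \in star_series circ k -> rstar_pJ (z *+ p).
Proof.
elim: k z => [|k IH] z zJ zB.
  move: zB; rewrite inE => /eqP -> a; rewrite mul0rn bstarE (lam0x h) subrr.
  exact: scale_set0 ideal_zmod.
have [w /setIP[wJ wB] ecp] := cpow_p_decomp zJ zB.
have [ub [uub _]] := circ_inverse h (cpow circ z p).
have -> : z *+ p = circ (cpow circ z p) ((- lam circ ub w) *+ p).
  by rewrite circE mulNrn -(lamMn h) -(lamN h) -(lamM h) uub (lam0x h) ecp addrK.
apply: rstar_pJ_circ; first exact: rstar_pJ_cpow.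
apply: IH; first by rewrite idealN ?ideal_lam.
by apply: Algebra.zmod_closedN (star_series_zmod h k) _ _; rewrite star_series_lam.
Qed.

(* pJ is an ideal: left stars by additivity, right stars by rstar_pJ_mul with k = n. *)
Lemma scale_ideal : is_ideal circ (scale_set J p).
Proof.
have [_ JB] := ideal_zmod.
split.
- exact: scale_set0 ideal_zmod.
- move=> _ _ /imsetP[x xJ ->] /imsetP[y yJ ->].
  by apply/imsetP; exists (x - y); rewrite ?mulrnBl ?JB.
- move=> a _ /imsetP[x xJ ->].
  by apply/imsetP; exists (bstar circ a x); rewrite ?(bstarMn h) ?ideal_starl.
- move=> _ a /imsetP[x xJ ->].
  by apply: (rstar_pJ_mul (k := n)); rewrite ?(star_series_full h pp hcard) ?inE.
Qed.

End PowerIdeal.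

Theorem corollary14 (i n p : nat) (A : finZmodType) (circ : A -> A -> A)
  (pp : prime p) (hpn : (n.+1 < p)%N)
  (hA : is_brace circ) (hcard : #|A| = (p ^ n)%N)
  (I : {set A}) (hI : is_ideal circ I) :
  is_ideal circ [set a *+ (p ^ i) | a in I].
Proof.
rewrite -/(scale_set I (p ^ i)); elim: i => [|i IH]; first by rewrite scale_set1.
rewrite expnSr scale_setM.
exact: (scale_ideal hA pp hcard (ltnW hpn) IH).
Qed.
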